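(* The stabilizer of $(1,0,0,0)$ in the group $\langle H^\infty,\iota\rangle$ is $\langle H^\infty[3],\iota\rangle$, where $H^\infty[3]$ acts on $\mathbb{R}^4$ fixing the first coordinate.
   Context: Let $\tau=(1+\sqrt5)/2$, $\tau'=(1-\sqrt5)/2$. Let $\Delta\subset\mathbb{R}^4$ be the set of 120 vectors consisting of: the 8 vectors obtained from $(\pm1,0,0,0)$ by permuting coordinates; the 16 vectors $\frac12(\pm1,\pm1,\pm1,\pm1)$; and the 96 vectors obtained from $\frac12(0,\pm1,\pm\tau',\pm\tau)$ (all sign choices) by even permutations of the coordinates; $\Delta'$ is its image under $\tau\leftrightarrow\tau'$ in each coordinate. For a unit vector $a$, $r_a(x)=x-2(x\cdot a)a$; $H^\infty$ is the group generated by $r_a$, $a\in\Delta\cup\Delta'$. Let $V=\{x\in\mathbb{R}^4:x_1=0\}$, $\Delta[3]=\Delta\cap V$, $\Delta[3]'=\Delta'\cap V$, and $H^\infty[3]$ the group generated by $r_a$, $a\in\Delta[3]\cup\Delta[3]'$. Let $\iota$ be the linear map $(x_1,x_2,x_3,x_4)\mapsto(x_1,x_2,x_4,x_3)$. *)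

(* Vectors of R^4 are row vectors 'rV[R]_4; linear maps act
   on the right: x |-> x *m M. *)
From HB Require Import structures.
From mathcomp Require Import all_boot all_order all_algebra all_fingroup.
Set Implicit Arguments. Unset Strict Implicit. Unset Printing Implicit Defensive.
Import Order.TTheory GRing.Theory Num.Theory.
Local Open Scope ring_scope.

Section H4.
Variable R : rcfType.

Definition tau : R := (1 + Num.sqrt 5) / 2.
Definition tau' : R := (1 - Num.sqrt 5) / 2.

Definition sgnb (b : bool) : R := if b then -1 else 1.

Definition base_vec (t t' : R) (b1 b2 b3 : bool) : 'rV[R]_4 :=
  \row_(j < 4) (match val j with
               | 0 => 0
               | 1 => sgnb b1
               | 2 => sgnb b2 * t'
               | _ => sgnb b3 * t
               end / 2).

Definition Delta_gen (t t' : R) (a : 'rV[R]_4) : Prop :=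
  (exists (i : 'I_4) (b : bool), a = sgnb b *: delta_mx 0 i)
  \/ (exists f : 'I_4 -> bool, a = \row_i (sgnb (f i) / 2))
  \/ (exists (s : 'S_4) (b1 b2 b3 : bool),
        ~~ odd_perm s /\ a = \row_i (base_vec t t' b1 b2 b3 0 (s i))).

Definition Delta (a : 'rV[R]_4) : Prop := Delta_gen tau tau' a.
Definition Delta' (a : 'rV[R]_4) : Prop := Delta_gen tau' tau a.

Definition inV (a : 'rV[R]_4) : Prop := a 0 0 = 0.

Definition refl (a : 'rV[R]_4) : 'M[R]_4 := 1%:M - 2 *: (a^T *m a).

Definition iota_mx : 'M[R]_4 := perm_mx (tperm (inord 2 : 'I_4) (inord 3)).

Inductive gen (S : 'M[R]_4 -> Prop) : 'M[R]_4 -> Prop :=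
  | gen_one : gen S 1%:M
  | gen_gen g : S g -> gen S g
  | gen_mul g h : gen S g -> gen S h -> gen S (g *m h)
  | gen_inv g : gen S g -> gen S (invmx g).

Definition gens_Hinf_iota (g : 'M[R]_4) : Prop :=
  (exists a, (Delta a \/ Delta' a) /\ g = refl a) \/ g = iota_mx.

Definition gens_H3_iota (g : 'M[R]_4) : Prop :=
  (exists a, ((Delta a /\ inV a) \/ (Delta' a /\ inV a)) /\ g = refl a)
  \/ g = iota_mx.

Definition e1 : 'rV[R]_4 := delta_mx 0 0.

End H4.

(* All matrices of <H^inf, iota> are orthogonal with entries in Z[tau, 1/2], because
   the roots in Delta and Delta' are unit vectors with such entries.  Given such a g
   fixing e1, its rows are moved one at a time onto e2, e3, e4 by elements of
   <H^inf[3], iota> fixing the basis vectors already reached, so that g s = 1 with s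
   in the small group.

   A row is a unit vector (0, u) / 2^k with u in Z[tau]^3 and u.u = 4^k.  If k > 0,
   either u is divisible by 2, or the reflection in one of the 16 roots
   (0, +-1, +-tau', +-tau)/2, (0, +-1, +-tau, +-tau')/2 of V turns it into
   (0, u') / 2^(k-1); this is a statement about Z[tau]/4, decided by enumeration.
   For k = 0 the vector is some +-e_j, which the reflections in the e_j, iota and a
   product of three root reflections carry to e2.  For a row orthogonal to e1 and e2
   the same enumeration shows that u is always divisible by 2, so the row is already
   +-e3 or +-e4. *)

From HB Require Import structures.
From mathcomp Require Import all_boot all_order all_algebra all_fingroup.
From mathcomp Require Import ring zify.
Set Implicit Arguments. Unset Strict Implicit. Unset Printing Implicit Defensive.
Import Order.TTheory GRing.Theory Num.Theory.
Local Open Scope ring_scope.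

(** * Arithmetic of Z[tau] on pairs of integers *)

Lemma sqr_eq_prime_mul_sqr (p : nat) (b c : int) :
  prime p -> c ^+ 2 = p%:Z * b ^+ 2 -> b = 0.
Proof.
move=> p_pr cb; apply/eqP; apply: contraT => b_neq0.
have c_neq0 : c != 0.
  have p_neq0 : p%:Z != 0 by rewrite -lt0n prime_gt0.
  apply: contra_neq b_neq0 => c0; move/eqP: cb; rewrite c0 expr0n /= eq_sym.
  by rewrite mulf_eq0 (negbTE p_neq0) expf_eq0 => /andP[_ /eqP].
have /(congr1 (logn p)) : (`|c| ^ 2 = p * `|b| ^ 2)%N.
  by rewrite -abszX cb abszM abszX.
rewrite lognM ?(prime_gt0 p_pr) ?expn_gt0 ?absz_gt0 ?b_neq0 //.
rewrite !lognX (pfactorK 1) //; lia.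
Qed.

Definition map3 (A B : Type) (f : A -> B) (u : A * A * A) : B * B * B :=
  (f u.1.1, f u.1.2, f u.2).

(* A pair (a, b) stands for a + b tau, multiplied using tau^2 = tau + 1.
   A triple u of such numbers stands for the vector (0, u) of V. *)
Section GoldenPairs.
Variable T : pzRingType.

Definition zadd (x y : T * T) : T * T := (x.1 + y.1, x.2 + y.2).
Definition zmul (x y : T * T) : T * T :=
  (x.1 * y.1 + x.2 * y.2, x.1 * y.2 + x.2 * y.1 + x.2 * y.2).
Definition zscale (c : T) (x : T * T) : T * T := (c * x.1, c * x.2).

Definition Z3 := ((T * T) * (T * T) * (T * T))%type.
Definition zero3 : Z3 := ((0, 0), (0, 0), (0, 0)).
Definition scale3 (c : T) : Z3 -> Z3 := map3 (zscale c).
Definition dot3 (u w : Z3) : T * T :=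
  zadd (zadd (zmul u.1.1 w.1.1) (zmul u.1.2 w.1.2)) (zmul u.2 w.2).

(* [refl3 b u] encodes [2 r_(b/2)], see [vecZ_refl] below. *)
Definition refl3 (b u : Z3) : Z3 :=
  let d := dot3 u b in
  (zadd (zscale 2 u.1.1) (zscale (-1) (zmul d b.1.1)),
   zadd (zscale 2 u.1.2) (zscale (-1) (zmul d b.1.2)),
   zadd (zscale 2 u.2) (zscale (-1) (zmul d b.2))).

End GoldenPairs.

Lemma scale3_inj (c : int) : c != 0 -> injective (scale3 c).
Proof.
move=> c0 [[[a1 b1] [a2 b2]] [a3 b3]] [[[a1' b1'] [a2' b2']] [a3' b3']] /=.
by case=> /(mulfI c0) -> /(mulfI c0) -> /(mulfI c0) -> /(mulfI c0) -> /(mulfI c0) -> /(mulfI c0) ->.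
Qed.

Lemma scale3M (c d : int) (u : Z3 int) : scale3 (c * d) u = scale3 c (scale3 d u).
Proof. by rewrite /scale3 /map3 /zscale /= !mulrA. Qed.

Definition sgnz (b : bool) : int := if b then -1 else 1.

Definition basis3 (j : 'I_3) (c : int) : Z3 int :=
  match val j with
  | 0 => ((c, 0), (0, 0), (0, 0))
  | 1 => ((0, 0), (c, 0), (0, 0))
  | _ => ((0, 0), (0, 0), (c, 0))
  end.

Lemma dot3_eq1 (u : Z3 int) :
  dot3 u u = (1, 0) -> exists j b, u = basis3 j (sgnz b).
Proof.
case: u => [[[a1 b1] [a2 b2]] [a3 b3]]; rewrite /dot3 /zadd /zmul /= => -[h1 h2].
have unit_sqr (x : int) : x * x <= 1 -> x = -1 \/ x = 0 \/ x = 1 by nia.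
have [? ? ?] : [/\ b1 = 0, b2 = 0 & b3 = 0] by split; nia.
subst b1 b2 b3.
have [?|[?|?]] : a1 = -1 \/ a1 = 0 \/ a1 = 1 by apply: unit_sqr; nia.
all: subst a1.
all: have [?|[?|?]] : a2 = -1 \/ a2 = 0 \/ a2 = 1 by apply: unit_sqr; nia.
all: subst a2.
all: have [?|[?|?]] : a3 = -1 \/ a3 = 0 \/ a3 = 1 by apply: unit_sqr; nia.
all: subst a3.
all: try (exfalso; lia).
all: solve [(exists ord0 + exists (lift ord0 ord0) + exists ord_max);
            (exists false + exists true); reflexivity].
Qed.

Definition root_D (b : bool * bool * bool) : Z3 int :=
  ((sgnz b.1.1, 0), (sgnz b.1.2, - sgnz b.1.2), (0, sgnz b.2)).
Definition root_D' (b : bool * bool * bool) : Z3 int :=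
  ((sgnz b.1.1, 0), (0, sgnz b.1.2), (sgnz b.2, - sgnz b.2)).

Definition signs3 : seq (bool * bool * bool) :=
  [seq (b, c) | b <- [seq (x, y) | x <- [:: false; true], y <- [:: false; true]],
                c <- [:: false; true]].

Definition roots_V : seq (Z3 int) := map root_D signs3 ++ map root_D' signs3.

Lemma dot3_roots_V b : b \in roots_V -> dot3 b b = (4, 0).
Proof.
have : all (fun b => dot3 b b == (4, 0)) roots_V by vm_compute.
by move=> /allP roots_dot /roots_dot /eqP.
Qed.

(** * Reduction modulo 4 *)

Definition red4 (x : int * int) : 'Z_4 * 'Z_4 := (x.1%:~R, x.2%:~R).

Lemma red4_add x y : red4 (zadd x y) = zadd (red4 x) (red4 y).
Proof. by rewrite /red4 /= !intrD. Qed.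
Lemma red4_mul x y : red4 (zmul x y) = zmul (red4 x) (red4 y).
Proof. by rewrite /red4 /= !(intrD, intrM). Qed.
Lemma red4_scale c x : red4 (zscale c x) = zscale c%:~R (red4 x).
Proof. by rewrite /red4 /= !intrM. Qed.

Lemma red4_dot3 u w : red4 (dot3 u w) = dot3 (map3 red4 u) (map3 red4 w).
Proof. by rewrite /dot3 !red4_add !red4_mul. Qed.

Lemma red4_refl3 b u : map3 red4 (refl3 b u) = refl3 (map3 red4 b) (map3 red4 u).
Proof.
rewrite /refl3 -red4_dot3; set d := dot3 u b.
by rewrite /map3 /= !(red4_add, red4_scale, red4_mul).
Qed.

Lemma Z4_four : (4%:~R : 'Z_4) = 0.
Proof. by apply/eqP. Qed.

Lemma Z4_intr_eq0 (z : int) : (z%:~R : 'Z_4) = 0 -> exists q, z = 4 * q.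
Proof.
move=> z0; exists (z %/ 4)%Z.
have r_ge0 : (0 <= z %% 4)%Z by rewrite modz_ge0.
have r_lt4 : (z %% 4 < 4)%Z by rewrite ltz_pmod.
have r_red0 : ((z %% 4)%Z%:~R : 'Z_4) = 0.
  by move: z0; rewrite {1}(divz_eq z 4) intrD intrM Z4_four mulr0 add0r.
suff r0 : (z %% 4)%Z = 0 by rewrite {1}(divz_eq z 4) r0 addr0 mulrC.
by move: r_red0; case: (z %% 4)%Z r_ge0 r_lt4 => // -[|[|[|[|n]]]].
Qed.

Lemma red4_eq0 (u : Z3 int) : map3 red4 u = zero3 _ -> exists w, u = scale3 4 w.
Proof.
case: u => [[[a1 b1] [a2 b2]] [a3 b3]] [].
move=> /Z4_intr_eq0 [q1 ->] /Z4_intr_eq0 [q2 ->] /Z4_intr_eq0 [q3 ->].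
move=> /Z4_intr_eq0 [q4 ->] /Z4_intr_eq0 [q5 ->] /Z4_intr_eq0 [q6 ->].
by exists ((q1, q2), (q3, q4), (q5, q6)).
Qed.

Lemma red4_even (u : Z3 int) :
  scale3 2 (map3 red4 u) = zero3 _ -> exists w, u = scale3 2 w.
Proof.
have -> : scale3 2 (map3 red4 u) = map3 red4 (scale3 2 u).
  by rewrite /scale3 /map3 /= !red4_scale.
have two_neq0 : (2 : int) != 0 by [].
case/red4_eq0 => w; rewrite (scale3M 2 2) => /(scale3_inj two_neq0) ->.
by exists w.
Qed.

Lemma red4_pow4 n : red4 (4 ^+ n.+1, 0) = (0, 0).
Proof. by rewrite /red4 exprSr intrM Z4_four mulr0. Qed.

(* The two facts about Z[tau]/4 used by the descent, decided by enumerating (Z[tau]/4)^3. *)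
Definition Z4_descent_ok (u : Z3 'Z_4) : bool :=
  (dot3 u u == (0, 0)) ==>
  [&& [|| scale3 2 u == zero3 _ |
          has (fun b => refl3 (map3 red4 b) u == zero3 _) roots_V] &
      (u.1.1 == (0, 0)) ==> (scale3 2 u == zero3 _)].

Definition Z4_all : seq 'Z_4 := [:: 0; 1; 2; 3].
Definition Z4_pairs := [seq (x, y) | x <- Z4_all, y <- Z4_all].
Definition Z4_triples : seq (Z3 'Z_4) :=
  [seq (xy, z) | xy <- [seq (x, y) | x <- Z4_pairs, y <- Z4_pairs], z <- Z4_pairs].

Definition Z4_descent_check : bool := all Z4_descent_ok Z4_triples.

Lemma Z4_descent_checkT : Z4_descent_check.
Proof. vm_compute; reflexivity. Qed.

Lemma Z4_descent_all (u : Z3 'Z_4) : Z4_descent_ok u.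
Proof.
have Z4_allP (z : 'Z_4) : z \in Z4_all by case: z => -[|[|[|[|]]]].
case: u => [[[a1 b1] [a2 b2]] [a3 b3]]; apply: (allP Z4_descent_checkT).
by rewrite !allpairs_f ?Z4_allP.
Qed.

Lemma Z4_descent_spec (u : Z3 int) n : dot3 u u = (4 ^+ n.+1, 0) ->
  [/\ scale3 2 (map3 red4 u) = zero3 _ \/
        exists2 b, b \in roots_V & map3 red4 (refl3 b u) = zero3 _ &
      u.1.1 = (0, 0) -> scale3 2 (map3 red4 u) = zero3 _].
Proof.
move=> uu; have := Z4_descent_all (map3 red4 u).
rewrite /Z4_descent_ok -red4_dot3 uu red4_pow4 eqxx implyTb.
case/andP => /orP[/eqP even | /hasP[b b_root /eqP refl0]] first_zero.
all: split=> [|u10]; last by apply/eqP; apply: (implyP first_zero); rewrite /= u10.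
  by left.
by right; exists b; rewrite ?red4_refl3.
Qed.

Lemma descent_step (u : Z3 int) n : dot3 u u = (4 ^+ n.+1, 0) ->
  (exists w, u = scale3 2 w) \/
  exists2 b, b \in roots_V & exists w, refl3 b u = scale3 4 w.
Proof.
case/Z4_descent_spec => -[/red4_even even | [b b_root /red4_eq0 refl0]] _.
  by left.
by right; exists b.
Qed.

Lemma descent_step_first0 (u : Z3 int) n :
  u.1.1 = (0, 0) -> dot3 u u = (4 ^+ n.+1, 0) ->
  exists2 w, u = scale3 2 w & w.1.1 = (0, 0).
Proof.
move=> u10 /Z4_descent_spec [_ /(_ u10) /red4_even [w uw]]; exists w => //.
move: u10; rewrite uw /= /zscale; case: w {uw} => -[[a b] _] _ /= [].
by move=> /eqP; rewrite mulf_eq0 /= => /eqP -> /eqP; rewrite mulf_eq0 /= => /eqP ->.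
Qed.

(** * Z[tau] inside R *)

Section GoldenReal.
Variable R : rcfType.
Local Notation tau := (tau R).
Local Notation tau' := (tau' R).

Lemma sqr_sqrt5 : Num.sqrt (5 : R) ^+ 2 = 5.
Proof. by rewrite sqr_sqrtr // ler0n. Qed.

Lemma tau_sqr : tau ^+ 2 = tau + 1.
Proof.
rewrite /tau; have s5 := sqr_sqrt5; set s := Num.sqrt 5 in s5 *.
apply/eqP; rewrite -subr_eq0.
have -> : ((1 + s) / 2) ^+ 2 - ((1 + s) / 2 + 1) = (s ^+ 2 - 5) / 4 by field.
by rewrite s5 subrr mul0r.
Qed.

Lemma tau'E : tau' = 1 - tau.
Proof. by rewrite /tau' /tau; field. Qed.

Lemma sqr_tau_add_sqr_tau' : tau ^+ 2 + tau' ^+ 2 = 3.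
Proof. by rewrite tau'E sqrrB tau_sqr expr1n; ring. Qed.

Definition ztR (x : int * int) : R := x.1%:~R + x.2%:~R * tau.

Lemma ztR_add x y : ztR (zadd x y) = ztR x + ztR y.
Proof. by rewrite /ztR /= !intrD; ring. Qed.

Lemma ztR_scale c x : ztR (zscale c x) = c%:~R * ztR x.
Proof. by rewrite /ztR /= !intrM; ring. Qed.

Lemma ztR_mul x y : ztR (zmul x y) = ztR x * ztR y.
Proof.
have t2 := tau_sqr; rewrite expr2 in t2.
rewrite /ztR /= !(intrD, intrM).
transitivity (x.1%:~R * y.1%:~R + x.2%:~R * y.2%:~R * (tau * tau)
  + (x.1%:~R * y.2%:~R + x.2%:~R * y.1%:~R) * tau : R); by [rewrite t2; ring | ring].
Qed.

(* Irrationality of sqrt 5. *)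
Lemma ztR_eq0 x : ztR x = 0 -> x = (0, 0).
Proof.
case: x => a b; rewrite /ztR /tau /= => ab0.
have s5 := sqr_sqrt5; set s := Num.sqrt 5 in ab0 s5.
have a2b : (2 * a + b)%:~R = - (b%:~R * s) :> R.
  transitivity (2 * (a%:~R + b%:~R * ((1 + s) / 2)) - b%:~R * s : R).
    by rewrite intrD intrM (_ : 2%:~R = 2) //; field.
  by rewrite ab0 mulr0 add0r.
have b0 : b = 0.
  apply: (@sqr_eq_prime_mul_sqr 5 b (2 * a + b)) => //; apply: (@intr_inj R).
  by rewrite !expr2 !intrM -!expr2 a2b sqrrN exprMn s5 mulrC.
by move: ab0; rewrite b0 mul0r addr0 => /eqP; rewrite intr_eq0 => /eqP ->.
Qed.

Lemma ztR_inj : injective ztR.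
Proof.
move=> [a b] [c d] ab_cd.
have /ztR_eq0 [/eqP] : ztR (a - c, b - d) = 0.
  by move: ab_cd; rewrite /ztR /= !intrB => /eqP; rewrite -subr_eq0 => /eqP <-; ring.
by rewrite subr_eq0 => /eqP -> /eqP; rewrite subr_eq0 => /eqP ->.
Qed.

Definition vecZ (k : nat) (u : Z3 int) : 'rV[R]_4 :=
  \row_(j < 4) (nth 0 [:: 0; ztR u.1.1; ztR u.1.2; ztR u.2] j / 2 ^+ k).

Lemma two_neq0 : (2 : R) != 0. Proof. by rewrite pnatr_eq0. Qed.

Lemma two_exp_neq0 k : (2 : R) ^+ k != 0. Proof. by rewrite expf_neq0 ?two_neq0. Qed.

Lemma intr_two_exp k : ((2 ^+ k : int)%:~R : R) = 2 ^+ k.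
Proof. by elim: k => [|k IH]; rewrite ?expr0 // !exprS intrM IH. Qed.

Lemma dot4E (v w : 'rV[R]_4) :
  (v *m w^T) 0 0 = v 0 0 * w 0 0 + v 0 1 * w 0 1 +
                   v 0 (inord 2) * w 0 (inord 2) + v 0 (inord 3) * w 0 (inord 3).
Proof.
rewrite mxE !big_ord_recl big_ord0 addr0 !addrA !mxE.
by congr (_ + _ + _ + _); congr (v 0 _ * w 0 _); apply/val_inj; rewrite /= ?inordK.
Qed.

Lemma reflE (v a : 'rV[R]_4) : v *m refl a = v - (2 * (v *m a^T) 0 0) *: a.
Proof.
rewrite /refl mulmxBr mulmx1 -scalemxAr mulmxA [v *m a^T]mx11_scalar.
by rewrite mul_scalar_mx scalerA [in RHS]mxE eqxx mulr1n.
Qed.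

Lemma vecZ_refl k u b : vecZ k u *m refl (vecZ 1 b) = vecZ k.+1 (refl3 b u).
Proof.
rewrite reflE dot4E /vecZ !mxE /= !inordK //.
have := two_neq0; have := two_exp_neq0 k => k0 h2.
apply/rowP => -[[|[|[|[|j]]]] lt_j4] //; rewrite !mxE //= ?mul0r ?mulr0 ?subrr //.
all: rewrite /dot3 !(ztR_add, ztR_scale, ztR_mul) mulrN1z (_ : 2%:~R = 2) //.
all: by rewrite !exprS expr0; field.
Qed.

Lemma vecZ_scale2 k w : vecZ k.+1 (scale3 2 w) = vecZ k w.
Proof.
have := two_neq0; have := two_exp_neq0 k => k0 h2.
apply/rowP => -[[|[|[|[|j]]]] lt_j4] //; rewrite !mxE //= ?mul0r //.
all: by rewrite ztR_scale exprS; field.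
Qed.

Lemma vecZ_dot k u :
  vecZ k u *m (vecZ k u)^T = (ztR (dot3 u u) / (2 ^+ k * 2 ^+ k))%:M.
Proof.
rewrite [LHS]mx11_scalar dot4E /vecZ !mxE /= !inordK //.
have := two_exp_neq0 k => k0.
by congr (_%:M) => /=; rewrite /dot3 !(ztR_add, ztR_mul); field.
Qed.

Lemma vecZ_unit_dot3 k u :
  vecZ k u *m (vecZ k u)^T = 1%:M -> dot3 u u = (4 ^+ k, 0).
Proof.
rewrite vecZ_dot => /matrixP /(_ 0 0); rewrite !mxE /= !mulr1n => uu.
have k0 := two_exp_neq0 k.
apply: ztR_inj; rewrite /ztR /= mul0r addr0 -[4]/(2 * 2 : int) exprMn intrM.
rewrite intr_two_exp.
by apply: (divIf (mulf_neq0 k0 k0)); rewrite uu divff ?mulf_neq0.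
Qed.

Lemma vecZ0_basis3 j b :
  vecZ 0 (basis3 j (sgnz b)) = sgnb R b *: delta_mx 0 (lift ord0 j).
Proof.
apply/rowP => i; rewrite !mxE expr0 divr1 /basis3.
case: j => -[|[|[|j]]] lt_j3 //; case: i => -[|[|[|[|i]]]] lt_i4 //.
all: by rewrite /= /ztR /sgnb /=; case: b; rewrite /= ?mul0r ?addr0 ?mulr1 ?mulr0.
Qed.

End GoldenReal.

(** * Orthogonal matrices over Z[tau, 1/2] *)

Section Generated.
Variable R : rcfType.
Implicit Types S T : 'M[R]_4 -> Prop.

Lemma gen_sub S T : (forall s, S s -> T s) -> forall g, gen S g -> gen T g.
Proof.
move=> ST g; elim=> [|h /ST|g1 h1 _ IH1 _ IH2|g1 _ IH]; by [exact: gen_one |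
  exact: gen_gen | exact: gen_mul | exact: gen_inv].
Qed.

Lemma gen_closed S (P : 'M[R]_4 -> Prop) :
  P 1%:M -> (forall s, S s -> P s) -> (forall g h, P g -> P h -> P (g *m h)) ->
  (forall g, P g -> P (invmx g)) -> forall g, gen S g -> P g.
Proof.
move=> P1 PS PM PV g.
by elim=> [|s /PS|g' h _ Pg _ Ph|g' _ Pg] //; [exact: PM | exact: PV].
Qed.

Lemma gen_fix S (v : 'rV[R]_4) : (forall s, S s -> s \in unitmx /\ v *m s = v) ->
  forall g, gen S g -> g \in unitmx /\ v *m g = v.
Proof.
move=> Sv; apply: gen_closed => //; first by rewrite unitmx1 mulmx1.
  by move=> g h [gU vg] [hU vh]; rewrite unitmx_mul gU hU mulmxA vg vh.
by move=> g [gU vg]; rewrite unitmx_inv gU -{1}vg mulmxK.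
Qed.

End Generated.

Section Dyadic.
Variable R : rcfType.
Local Notation ztR := (@ztR R).

Definition ztd (x : R) : Prop := exists k p, x = ztR p / 2 ^+ k.

Lemma ztd_intr (z : int) : ztd z%:~R.
Proof. by exists 0%N, (z, 0); rewrite /ztR /= mul0r addr0 expr0 divr1. Qed.

Lemma ztd_nat (n : nat) : ztd n%:R.
Proof. by rewrite pmulrn; apply: ztd_intr. Qed.

Lemma ztdD x y : ztd x -> ztd y -> ztd (x + y).
Proof.
move=> [k [p ->]] [m [q ->]]; exists (k + m)%N, (zadd (zscale (2 ^+ m) p) (zscale (2 ^+ k) q)).
have := two_exp_neq0 R k; have := two_exp_neq0 R m => m0 k0.
by rewrite ztR_add !ztR_scale !intr_two_exp exprD; field; rewrite m0 k0.
Qed.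

Lemma ztdM x y : ztd x -> ztd y -> ztd (x * y).
Proof.
move=> [k [p ->]] [m [q ->]]; exists (k + m)%N, (zmul p q).
have := two_exp_neq0 R k; have := two_exp_neq0 R m => m0 k0.
by rewrite ztR_mul exprD; field; rewrite m0 k0.
Qed.

Lemma ztdN x : ztd x -> ztd (- x).
Proof. by rewrite -mulN1r -(mulrN1z 1); apply: ztdM; apply: ztd_intr. Qed.

Lemma ztd_sum (I : finType) (F : I -> R) : (forall i, ztd (F i)) -> ztd (\sum_i F i).
Proof. by move=> ztdF; apply: (big_ind ztd) => //; [exact: ztd_nat 0 | exact: ztdD]. Qed.

Lemma ztd_tau : ztd (tau R).
Proof. by exists 0%N, (0, 1); rewrite /ztR /= add0r mul1r expr0 divr1. Qed.

Lemma ztd_tau' : ztd (tau' R).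
Proof. by rewrite tau'E; apply: ztdD; [exact: ztd_nat 1 | apply: ztdN; exact: ztd_tau]. Qed.

Lemma ztd_half : ztd 2^-1.
Proof. by exists 1%N, (1, 0); rewrite /ztR /= mul0r addr0 expr1 mul1r. Qed.

Lemma ztd_sgnb b : ztd (sgnb R b).
Proof. by case: b; [apply: ztdN|]; exact: ztd_nat 1. Qed.

Lemma ztd_rescale k m p : ztR p / 2 ^+ k = ztR (zscale (2 ^+ m) p) / 2 ^+ (m + k).
Proof.
have := two_exp_neq0 R k; have := two_exp_neq0 R m => m0 k0.
by rewrite ztR_scale intr_two_exp exprD; field; rewrite m0 k0.
Qed.

Lemma ztd_vecZ (v : 'rV[R]_4) : v 0 0 = 0 -> (forall j, ztd (v 0 j)) ->
  exists k u, v = vecZ R k u.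
Proof.
move=> v0 ztd_v.
have [k1 [p1 v1]] := ztd_v 1; have [k2 [p2 v2]] := ztd_v (inord 2).
have [k3 [p3 v3]] := ztd_v (inord 3).
exists (k1 + k2 + k3)%N, (zscale (2 ^+ (k2 + k3)) p1, zscale (2 ^+ (k1 + k3)) p2,
                          zscale (2 ^+ (k1 + k2)) p3).
apply/rowP => -[[|[|[|[|j]]]] lt_j4] //; rewrite !mxE /=.
- by rewrite mul0r -v0; congr (v 0 _); apply: val_inj.
- rewrite (_ : Ordinal lt_j4 = 1) ?v1; last exact: val_inj.
  by rewrite (ztd_rescale _ (k2 + k3)); congr (_ / 2 ^+ _); lia.
- rewrite (_ : Ordinal lt_j4 = inord 2) ?v2; last by apply: val_inj; rewrite /= inordK.
  by rewrite (ztd_rescale _ (k1 + k3)); congr (_ / 2 ^+ _); lia.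
- rewrite (_ : Ordinal lt_j4 = inord 3) ?v3; last by apply: val_inj; rewrite /= inordK.
  by rewrite (ztd_rescale _ (k1 + k2)); congr (_ / 2 ^+ _); lia.
Qed.

Definition orth_ztd (g : 'M[R]_4) : Prop := g *m g^T = 1%:M /\ forall i j, ztd (g i j).

Lemma orth_unitmx (g : 'M[R]_4) : g *m g^T = 1%:M -> g \in unitmx.
Proof. by case/mulmx1_unit. Qed.

Lemma orth_ztd1 : orth_ztd 1%:M.
Proof. by split=> [|i j]; rewrite ?trmx1 ?mulmx1 // mxE; apply: ztd_nat. Qed.

Lemma orth_ztdM g h : orth_ztd g -> orth_ztd h -> orth_ztd (g *m h).
Proof.
move=> [gg ztd_g] [hh ztd_h]; split=> [|i j].
  by rewrite trmx_mul mulmxA -(mulmxA g) hh mulmx1 gg.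
by rewrite mxE; apply: ztd_sum => k; apply: ztdM.
Qed.

Lemma orth_ztdV g : orth_ztd g -> orth_ztd (invmx g).
Proof.
move=> [gg ztd_g]; have gU := orth_unitmx gg.
have -> : invmx g = g^T by rewrite -[RHS]mul1mx -(mulVmx gU) -mulmxA gg mulmx1.
by split=> [|i j]; rewrite ?trmxK ?mxE //; apply: mulmx1C.
Qed.

Lemma orth_ztd_gen S : (forall s, S s -> orth_ztd s) -> forall g, gen S g -> orth_ztd g.
Proof.
by move=> S_orth; apply: gen_closed => //; [exact: orth_ztd1 | exact: orth_ztdM | exact: orth_ztdV].
Qed.

End Dyadic.

Section Reflections.
Variable R : rcfType.
Implicit Types (a v : 'rV[R]_4) (g : 'M[R]_4).

Lemma refl_tr a : (refl a)^T = refl a.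
Proof. by rewrite /refl linearB /= trmx1 linearZ /= trmx_mul trmxK. Qed.

Lemma refl_orth a : a *m a^T = 1%:M -> refl a *m (refl a)^T = 1%:M.
Proof.
move=> aa; rewrite refl_tr /refl; set P := a^T *m a.
have PP : P *m P = P by rewrite /P mulmxA -(mulmxA a^T) aa mulmx1.
rewrite mulmxBl mul1mx mulmxBr mulmx1 -scalemxAl -scalemxAr PP scalerA.
by rewrite (_ : 2 * 2 = 2 + 2 :> R) ?scalerDl ?opprD ?opprK ?addrA ?subrK ?addrK //; ring.
Qed.

Lemma refl_fix v a : (v *m a^T) 0 0 = 0 -> v *m refl a = v.
Proof. by move=> va; rewrite reflE va mulr0 scale0r subr0. Qed.

Lemma refl_self a : a *m a^T = 1%:M -> a *m refl a = - a.
Proof.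
move=> aa; rewrite reflE aa mxE eqxx mulr1 -[X in X - _]scale1r -scalerBl.
by rewrite (_ : 1 - 2 = -1 :> R) ?scaleN1r //; ring.
Qed.

Lemma unit_mul_orth v g :
  v *m v^T = 1%:M -> g *m g^T = 1%:M -> (v *m g) *m (v *m g)^T = 1%:M.
Proof. by move=> vv gg; rewrite trmx_mul mulmxA -(mulmxA v) gg mulmx1. Qed.

Lemma delta_dot (i j : 'I_4) :
  delta_mx 0 i *m (delta_mx 0 j)^T = (i == j)%:R%:M :> 'M[R]_1.
Proof.
rewrite trmx_delta mul_delta_mx_cond [LHS]mx11_scalar.
by rewrite mulmxnE !mxE.
Qed.

Lemma delta_perm (i : 'I_4) (s : 'S_4) :
  delta_mx 0 i *m perm_mx s = delta_mx 0 (s i) :> 'rV[R]_4.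
Proof. by rewrite -rowE /perm_mx; apply/rowP => j; rewrite !mxE eq_sym. Qed.

Lemma orth_ztd_refl a : a *m a^T = 1%:M -> (forall j, ztd (a 0 j)) -> orth_ztd (refl a).
Proof.
move=> aa ztd_a; split=> [|i j]; first exact: refl_orth.
rewrite !mxE big_ord1 !mxE; apply: ztdD; first exact: ztd_nat.
by apply/ztdN/ztdM; [exact: ztd_nat | exact: ztdM].
Qed.

Lemma orth_ztd_iota : orth_ztd (iota_mx R).
Proof.
split=> [|i j]; last by rewrite !mxE; exact: ztd_nat.
by rewrite /iota_mx tr_perm_mx -perm_mxM mulgV perm_mx1.
Qed.

End Reflections.

Section Generators.
Variable R : rcfType.
Local Notation H3 := (gen (@gens_H3_iota R)).

Lemma row_unit (a : 'rV[R]_4) : \sum_j a 0 j ^+ 2 = 1 -> a *m a^T = 1%:M.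
Proof.
by move=> a1; rewrite [LHS]mx11_scalar mxE -a1; congr (_%:M); apply: eq_bigr => j _;
  rewrite mxE expr2.
Qed.

Lemma sqr_sgnb b : sgnb R b ^+ 2 = 1.
Proof. by case: b; rewrite /sgnb ?sqrrN expr1n. Qed.

Lemma Delta_gen_unit (t t' : R) (a : 'rV[R]_4) :
  t ^+ 2 + t' ^+ 2 = 3 -> Delta_gen t t' a -> a *m a^T = 1%:M.
Proof.
move=> tt' [[i [b ->]] | [[f ->] | [s [b1 [b2 [b3 [_ ->]]]]]]]; apply: row_unit.
- rewrite (bigD1 i) //= big1 => [|j /negbTE ji]; rewrite !mxE ?ji ?mulr0 ?expr0n //.
  by rewrite !eqxx mulr1 sqr_sgnb addr0.
- rewrite (eq_bigr (fun _ => 1 / 2 ^+ 2)) => [|j _]; last by rewrite !mxE expr_div_n sqr_sgnb.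
  by rewrite sumr_const card_ord -mulr_natr; field.
- rewrite (eq_bigr (fun j => base_vec t t' b1 b2 b3 0 (s j) ^+ 2)) => [|j _]; last by rewrite mxE.
  transitivity (\sum_j base_vec t t' b1 b2 b3 0 j ^+ 2); first by rewrite [RHS](reindex_perm s).
  rewrite !big_ord_recl big_ord0 !mxE /= !expr_div_n !exprMn !sqr_sgnb !mul1r.
  have -> : t ^+ 2 = 3 - t' ^+ 2 by rewrite -tt' addrK.
  by rewrite expr0n /=; field.
Qed.

Lemma Delta_gen_ztd (t t' : R) (a : 'rV[R]_4) :
  ztd t -> ztd t' -> Delta_gen t t' a -> forall j, ztd (a 0 j).
Proof.
move=> zt zt' [[i [b ->]] | [[f ->] | [s [b1 [b2 [b3 [_ ->]]]]]]] j; rewrite !mxE.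
- by apply: ztdM; [exact: ztd_sgnb | exact: ztd_nat].
- by apply: ztdM; [exact: ztd_sgnb | exact: ztd_half].
case: (val (s j)) => [|[|[|n]]];
  by repeat first [apply: ztdM | exact: ztd_sgnb | exact: ztd_half | exact: ztd_nat 0].
Qed.

Lemma orth_ztd_gens_Hinf (g : 'M[R]_4) : gens_Hinf_iota g -> orth_ztd g.
Proof.
case=> [[a [Da ->]]|->]; last exact: orth_ztd_iota.
case: Da => Da; apply: orth_ztd_refl.
- by apply: (Delta_gen_unit _ Da); exact: sqr_tau_add_sqr_tau'.
- by apply: (Delta_gen_ztd _ _ Da); [exact: ztd_tau | exact: ztd_tau'].
- by apply: (Delta_gen_unit _ Da); rewrite addrC; exact: sqr_tau_add_sqr_tau'.
- by apply: (Delta_gen_ztd _ _ Da); [exact: ztd_tau' | exact: ztd_tau].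
Qed.

Lemma gens_H3_Hinf (g : 'M[R]_4) : gens_H3_iota g -> gens_Hinf_iota g.
Proof. by case=> [[a [[[Da _]|[Da _]] ->]]|->]; [left; exists a; auto..|right]. Qed.

Lemma H3_fix_e1 (g : 'M[R]_4) : H3 g -> e1 R *m g = e1 R.
Proof.
suff gens_fix s : gens_H3_iota s -> s \in unitmx /\ e1 R *m s = e1 R.
  by move=> gg; have [] := gen_fix gens_fix gg.
move=> gs; split.
  by have [ss _] := orth_ztd_gens_Hinf (gens_H3_Hinf gs); exact: orth_unitmx.
case: gs => [[a [aV ->]]|->].
  by apply: refl_fix; rewrite -rowE !mxE; case: aV => -[].
by rewrite /e1 /iota_mx delta_perm tpermD // -val_eqE /= inordK.
Qed.

Lemma ztR_sgnz b : ztR R (sgnz b, 0) = sgnb R b.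
Proof. by case: b; rewrite /ztR /sgnb /=; ring. Qed.

Lemma ztR_sgnz_tau b : ztR R (0, sgnz b) = sgnb R b * tau R.
Proof. by case: b; rewrite /ztR /sgnb /=; ring. Qed.

Lemma ztR_sgnz_tau' b : ztR R (sgnz b, - sgnz b) = sgnb R b * tau' R.
Proof. by case: b; rewrite /ztR /sgnb /= tau'E; ring. Qed.

Lemma root_D_Delta b : Delta (vecZ R 1 (root_D b)) /\ inV (vecZ R 1 (root_D b)).
Proof.
split; last by rewrite /inV mxE /= mul0r.
right; right; exists 1%g, b.1.1, b.1.2, b.2; split; first by rewrite odd_perm1.
apply/rowP => j; rewrite !mxE perm1 expr1.
by case: j => -[|[|[|[|j]]]] lt_j4 //=; rewrite ?ztR_sgnz ?ztR_sgnz_tau ?ztR_sgnz_tau'.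
Qed.

Lemma root_D'_Delta' b : Delta' (vecZ R 1 (root_D' b)) /\ inV (vecZ R 1 (root_D' b)).
Proof.
split; last by rewrite /inV mxE /= mul0r.
right; right; exists 1%g, b.1.1, b.1.2, b.2; split; first by rewrite odd_perm1.
apply/rowP => j; rewrite !mxE perm1 expr1.
by case: j => -[|[|[|[|j]]]] lt_j4 //=; rewrite ?ztR_sgnz ?ztR_sgnz_tau ?ztR_sgnz_tau'.
Qed.

Lemma H3_refl_root b : b \in roots_V -> H3 (refl (vecZ R 1 b)).
Proof.
rewrite mem_cat => /orP[] /mapP [c _ ->]; apply: gen_gen; left.
  by exists (vecZ R 1 (root_D c)); split => //; left; apply: root_D_Delta.
by exists (vecZ R 1 (root_D' c)); split => //; right; apply: root_D'_Delta'.
Qed.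

Lemma vecZ_root_unit b : b \in roots_V -> vecZ R 1 b *m (vecZ R 1 b)^T = 1%:M.
Proof.
move=> /dot3_roots_V bb; rewrite vecZ_dot bb /ztR /= mul0r addr0 expr1.
have -> : 4%:~R = 2 * 2 :> R by rewrite pmulrn -natrM.
by rewrite divff // mulf_neq0 ?two_neq0.
Qed.

Lemma H3_refl_delta (j : 'I_4) : j != 0 -> H3 (refl (delta_mx 0 j)).
Proof.
move=> j_neq0; apply: gen_gen; left; exists (delta_mx 0 j); split => //; left; split.
  by left; exists j, false; rewrite /sgnb scale1r.
by rewrite /inV mxE eq_sym (negbTE j_neq0) andbF.
Qed.

Lemma H3_iota : H3 (iota_mx R).
Proof. by apply: gen_gen; right. Qed.

Lemma delta3_iota : delta_mx 0 (inord 3) *m iota_mx R = delta_mx 0 (inord 2) :> 'rV[R]_4.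
Proof. by rewrite delta_perm tpermR. Qed.

Definition rot32 : 'M[R]_4 :=
  refl (vecZ R 1 (root_D (false, true, false))) *m
  refl (vecZ R 1 (root_D (false, false, false))) *m
  refl (vecZ R 1 (root_D (false, false, true))).

Lemma H3_rot32 : H3 rot32.
Proof. by apply: gen_mul; first apply: gen_mul; apply: H3_refl_root. Qed.

Lemma delta2_rot32 : delta_mx 0 (inord 2) *m rot32 = delta_mx 0 1 :> 'rV[R]_4.
Proof.
have e1E : delta_mx 0 1 = vecZ R 0 ((1, 0), (0, 0), (0, 0)).
  rewrite -[RHS]/(vecZ R 0 (basis3 ord0 (sgnz false))) vecZ0_basis3 scale1r.
  by congr delta_mx; apply: val_inj.
have e2E : delta_mx 0 (inord 2) = vecZ R 0 ((0, 0), (1, 0), (0, 0)).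
  rewrite -[RHS]/(vecZ R 0 (basis3 (lift ord0 ord0) (sgnz false))) vecZ0_basis3 scale1r.
  by congr delta_mx; apply: val_inj; rewrite /= inordK.
rewrite e2E e1E /rot32 !mulmxA !vecZ_refl.
rewrite (_ : refl3 _ (refl3 _ (refl3 _ _)) = scale3 2 (scale3 2 (scale3 2 ((1,0),(0,0),(0,0))))) //.
by rewrite !vecZ_scale2.
Qed.

End Generators.

(** * Moving unit vectors onto the standard basis *)

Section Stabilizer.
Variable R : rcfType.
Local Notation H3 := (gen (@gens_H3_iota R)).
Local Notation e_ i := (delta_mx 0 i : 'rV[R]_4).

Definition fixes_below (k : nat) (s : 'M[R]_4) : Prop :=
  forall i : 'I_4, (i < k)%N -> e_ i *m s = e_ i.

Lemma fixes_belowM k s t : fixes_below k s -> fixes_below k t -> fixes_below k (s *m t).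
Proof. by move=> fs ft i ik; rewrite mulmxA fs ?ft. Qed.

Lemma H3_fixes_below1 s : H3 s -> fixes_below 1 s.
Proof.
move=> Hs i; rewrite ltnS leqn0 => /eqP i0.
by rewrite (_ : i = 0) ?H3_fix_e1 //; apply: val_inj.
Qed.

Lemma basis_move (j k : nat) : (0 < k <= j)%N -> (j < 4)%N ->
  exists s, [/\ H3 s, fixes_below k s & e_ (inord j) *m s = e_ (inord k)].
Proof.
have stay : exists s, [/\ H3 s, fixes_below k s & e_ (inord k) *m s = e_ (inord k)].
  by exists 1%:M; split; [exact: gen_one | move=> i _ |]; rewrite mulmx1.
have iota_fix2 : fixes_below 2 (iota_mx R).
  move=> i i2; rewrite delta_perm tpermD // -val_eqE /= inordK //; lia.
case: k stay => // -[|[|[|//]]] stay; case: j => [|[|[|[|//]]]] // _ _; try exact: stay.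
- exists (rot32 R); split; [exact: H3_rot32 | exact: H3_fixes_below1 (H3_rot32 R) |].
  by rewrite delta2_rot32; congr delta_mx; apply: val_inj; rewrite /= inordK.
- exists (iota_mx R *m rot32 R); split.
  + by apply: gen_mul; [exact: H3_iota | exact: H3_rot32].
  + by apply: H3_fixes_below1; apply: gen_mul; [exact: H3_iota | exact: H3_rot32].
  by rewrite mulmxA delta3_iota delta2_rot32; congr delta_mx; apply: val_inj; rewrite /= inordK.
- by exists (iota_mx R); split; [exact: H3_iota | exact: iota_fix2 | exact: delta3_iota].
Qed.

Definition signed_basis (k : nat) (v : 'rV[R]_4) : Prop :=
  exists b (j : 'I_4), (k <= j)%N /\ v = sgnb R b *: e_ j.

Lemma sgnb_neq0 b : sgnb R b != 0.
Proof. by case: b; rewrite /sgnb ?oppr_eq0 oner_eq0. Qed.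

Lemma signed_basis_zeros k k' v : signed_basis k v ->
  (forall i : 'I_4, (i < k')%N -> v 0 i = 0) -> signed_basis k' v.
Proof.
move=> [b [j [kj ->]]] v0; exists b, j; split => //; rewrite leqNgt; apply/negP.
by move=> /v0 /eqP; rewrite !mxE !eqxx mulr1 (negbTE (sgnb_neq0 b)).
Qed.

Lemma signed_basis_move k v : (0 < k < 4)%N -> signed_basis k v ->
  exists s, [/\ H3 s, fixes_below k s & v *m s = e_ (inord k)].
Proof.
move=> /andP[k0 k4] [b [j [kj ->]]].
have j0 : j != 0 by rewrite -lt0n (leq_trans k0).
have [s [Hs fix_s js]] := basis_move (introT andP (conj k0 kj)) (ltn_ord j).
have ej : e_ j *m (e_ j)^T = 1%:M by rewrite delta_dot eqxx.
exists ((if b then refl (e_ j) else 1%:M) *m s); split.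
- by apply: gen_mul => //; case: b; [exact: H3_refl_delta | exact: gen_one].
- apply: fixes_belowM => // i ik; case: b; rewrite ?mulmx1 //.
  by apply: refl_fix; rewrite delta_dot mxE; case: eqP => // ij; move: ik; rewrite ij ltnNge kj.
- rewrite mulmxA -scalemxAl -js inord_val.
  by case: b; rewrite /sgnb ?mulmx1 ?scale1r // refl_self // scaleN1r opprK.
Qed.

Lemma vecZ0_signed_basis u : dot3 u u = (1, 0) -> signed_basis 1 (vecZ R 0 u).
Proof. by case/dot3_eq1 => j [b ->]; exists b, (lift ord0 j); rewrite vecZ0_basis3. Qed.

Lemma descent k u : vecZ R k u *m (vecZ R k u)^T = 1%:M ->
  exists s, H3 s /\ signed_basis 1 (vecZ R k u *m s).
Proof.
elim: k u => [|k IH] u uu.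
  exists 1%:M; split; first exact: gen_one.
  by rewrite mulmx1; apply: vecZ0_signed_basis; rewrite (vecZ_unit_dot3 uu) expr0.
have [[w uw] | [b b_root [w bu]]] := descent_step (vecZ_unit_dot3 uu).
  by rewrite uw vecZ_scale2 in uu *; apply: IH.
have ub : vecZ R k.+1 u *m refl (vecZ R 1 b) = vecZ R k w.
  by rewrite vecZ_refl bu (scale3M 2 2) !vecZ_scale2.
have [|s [Hs sb]] := IH w.
  by rewrite -ub unit_mul_orth // refl_orth // vecZ_root_unit.
exists (refl (vecZ R 1 b) *m s); split; last by rewrite mulmxA ub.
by apply: gen_mul => //; apply: H3_refl_root.
Qed.

Lemma descent_first0 k u : u.1.1 = (0, 0) -> vecZ R k u *m (vecZ R k u)^T = 1%:M ->
  signed_basis 2 (vecZ R k u).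
Proof.
elim: k u => [|k IH] u u0 uu.
  apply: (signed_basis_zeros (vecZ0_signed_basis _)); first by rewrite (vecZ_unit_dot3 uu).
  move=> i; rewrite mxE; case: i => -[|[|//]] ? _ /=; rewrite ?mul0r //.
  by rewrite u0 /ztR /= mul0r addr0 mul0r.
have [w uw w0] := descent_step_first0 u0 (vecZ_unit_dot3 uu).
by rewrite uw vecZ_scale2 in uu *; apply: IH.
Qed.

Lemma orth_ztd_H3 s : H3 s -> orth_ztd s.
Proof. by apply: orth_ztd_gen => t /gens_H3_Hinf; exact: orth_ztd_gens_Hinf. Qed.

Lemma move_to_basis k (v : 'rV[R]_4) : (0 < k < 4)%N ->
  v *m v^T = 1%:M -> (forall j, ztd (v 0 j)) -> (forall i : 'I_4, (i < k)%N -> v 0 i = 0) ->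
  exists s, [/\ H3 s, fixes_below k s & v *m s = e_ (inord k)].
Proof.
move=> k_range vv ztd_v v0; have /andP[k0 _] := k_range.
have [m [u vE]] := ztd_vecZ (v0 0 k0) ztd_v; rewrite {}vE in vv v0 *.
have [k_gt1 | k_le1] := ltnP 1 k.
  apply: signed_basis_move => //; apply: (signed_basis_zeros _ v0).
  apply: descent_first0 vv; apply: (@ztR_eq0 R).
  have /eqP := v0 1 k_gt1; rewrite mxE /= mulf_eq0 invr_eq0 (negbTE (two_exp_neq0 R m)) orbF.
  by move/eqP.
have k1 : k = 1%N by apply/eqP; rewrite eqn_leq k_le1 k0.
subst k; have [s1 [Hs1 s1b]] := descent vv.
have [s2 [Hs2 _ s2e]] := signed_basis_move k_range s1b.
have Hs : H3 (s1 *m s2) by exact: gen_mul.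
by exists (s1 *m s2); split; [| exact: H3_fixes_below1 | rewrite mulmxA].
Qed.

Definition rows_id (k : nat) (g : 'M[R]_4) : Prop :=
  forall i : 'I_4, (i < k)%N -> row i g = e_ i.

Lemma rows_id_entry k g (i j : 'I_4) : rows_id k g -> (i < k)%N -> g i j = (j == i)%:R.
Proof. by move=> gk ik; have := congr1 (fun v : 'rV_4 => v 0 j) (gk i ik); rewrite !mxE. Qed.

Lemma rows_id_zero k g (r i : 'I_4) : g *m g^T = 1%:M -> rows_id k g ->
  (i < k)%N -> i != r -> g r i = 0.
Proof.
move=> gg gk ik ir; have := congr1 (fun M : 'M_4 => M r i) gg.
rewrite !mxE eq_sym (negbTE ir) mulr0n => <-.
have gi j : g i j = (j == i)%:R := @rows_id_entry k g i j gk ik.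
rewrite (bigD1 i) //= big1 => [|j /negbTE ji]; rewrite !mxE gi.
  by rewrite eqxx mulr1 addr0.
by rewrite ji mulr0.
Qed.

Lemma stab_completion n g : (n < 4)%N -> orth_ztd g -> rows_id (4 - n) g ->
  exists s, H3 s /\ g *m s = 1%:M.
Proof.
elim: n g => [|n IH] g n4 [gg ztd_g] gk.
  exists 1%:M; split; first exact: gen_one.
  by rewrite mulmx1; apply/row_matrixP => i; rewrite row1 gk.
set k := (4 - n.+1)%N in gk; have k_range : (0 < k < 4)%N by rewrite /k; lia.
pose r : 'I_4 := inord k.
have rk : r = k :> nat by rewrite /r inordK //; lia.
have [|j|i ik|s [Hs fix_s rs]] := move_to_basis (v := row r g) k_range.
- by rewrite rowE unit_mul_orth // delta_dot eqxx.
- by rewrite mxE.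
- by rewrite mxE (rows_id_zero gg gk) //; apply: contraTneq ik => ->; rewrite rk ltnn.
have [||t [Ht gst]] := IH (g *m s) (ltnW n4).
- by apply: orth_ztdM; [split | exact: orth_ztd_H3].
- move=> i; rewrite (_ : (4 - n = k.+1)%N); last by rewrite /k; lia.
  rewrite ltnS leq_eqVlt => /orP[/eqP ik | ik]; rewrite row_mul.
    by rewrite (_ : i = r) ?rs //; apply: val_inj; rewrite /= ik rk.
  by rewrite gk ?fix_s.
- by exists (s *m t); split; [exact: gen_mul | rewrite mulmxA].
Qed.

End Stabilizer.

Theorem mainTheorem12 (R : rcfType) (g : 'M[R]_4) :
  (gen (@gens_Hinf_iota R) g /\ e1 R *m g = e1 R) <-> gen (@gens_H3_iota R) g.
Proof.
split=> [[Hg g_e1] | Hg]; last first.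
  by split; [exact: gen_sub (@gens_H3_Hinf R) _ Hg | exact: H3_fix_e1].
have rows1 : rows_id 1 g.
  by move=> i; rewrite ltnS leqn0 => /eqP i0; rewrite (_ : i = 0) ?rowE //; apply: val_inj.
have g_orth : orth_ztd g := orth_ztd_gen (@orth_ztd_gens_Hinf R) Hg.
have [s [Hs gs]] := stab_completion (isT : 3 < 4)%N g_orth rows1.
have [_ sU] := mulmx1_unit gs.
have -> : g = invmx s by rewrite -[g]mulmx1 -(mulmxV sU) mulmxA gs mul1mx.
exact: gen_inv.
Qed.
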